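(* There is an absolute constant $C>0$ such that the following holds. Let $G=(V,E)$ be an unweighted graph with maximum vertex degree $d_{\max}$, and let $\{s,t\}\in E$. Then there is a subset $S\subset V$ with $s\in S$, $t\in V\setminus S$, and $$ B_{st}^{2}\leq C\, d_{\max}\,\Theta(S)^{-2}. $$
   Context: For an unweighted graph with $n$ vertices, $L=D-A$ is the graph Laplacian, $L^{+}$ its Moore–Penrose pseudoinverse, $L^{2+}=(L^+)^2$, and $1_v$ the indicator vector of vertex $v$. The biharmonic distance is $B_{st}=\sqrt{(1_s-1_t)^{T}L^{2+}(1_s-1_t)}$. For a nonempty proper subset $S\subset V$, $E(S,V\setminus S)$ is the set of edges with one endpoint in $S$ and one in $V\setminus S$, and the isoperimetric ratio is $\Theta(S)=\frac{n|E(S,V\setminus S)|}{|S||V\setminus S|}$ (the paper states the conclusion as $B_{st}^2\in O(d_{\max}\Theta(S)^{-2})$). *)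

From HB Require Import structures.
From mathcomp Require Import all_boot all_order all_algebra.
From mathcomp Require Import reals.
Set Implicit Arguments. Unset Strict Implicit. Unset Printing Implicit Defensive.
Import Order.TTheory GRing.Theory Num.Theory.
Local Open Scope ring_scope.

Definition simple_graph (n : nat) (adj : rel 'I_n) : Prop :=
  symmetric adj /\ irreflexive adj.

Definition deg (n : nat) (adj : rel 'I_n) (v : 'I_n) : nat :=
  #|[set w | adj v w]|.

Definition dmax (n : nat) (adj : rel 'I_n) : nat :=
  \max_(v < n) deg adj v.

Definition laplacian (R : realType) (n : nat) (adj : rel 'I_n) : 'M[R]_n :=
  \matrix_(i, j) ((if i == j then (deg adj i)%:R else 0) - (adj i j)%:R).

Definition is_pinv (R : realType) (n : nat) (A X : 'M[R]_n) : Prop :=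
  [/\ A *m X *m A = A, X *m A *m X = X,
      (A *m X)^T = A *m X & (X *m A)^T = X *m A].

Definition ind (R : realType) (n : nat) (v : 'I_n) : 'cV[R]_n :=
  \col_i (i == v)%:R.

Definition biharmonic (R : realType) (n : nat) (Lp : 'M[R]_n) (s t : 'I_n) : R :=
  let b := ind R s - ind R t in
  Num.sqrt ((b^T *m (Lp *m Lp) *m b) 0 0).

(* |E(S, V\S)| : each crossing edge counted once (as the ordered pair
   (x,y) with x in S, y not in S). *)
Definition cut_size (n : nat) (adj : rel 'I_n) (S : {set 'I_n}) : nat :=
  #|[set p : 'I_n * 'I_n | [&& p.1 \in S, p.2 \notin S & adj p.1 p.2]]|.

Definition iso_ratio (R : realType) (n : nat) (adj : rel 'I_n) (S : {set 'I_n}) : R :=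
  (n * cut_size adj S)%:R / (#|S| * #|~: S|)%:R.

From HB Require Import structures.
From mathcomp Require Import all_boot all_order all_algebra.
From mathcomp Require Import reals.
From mathcomp Require Import ring lra zify.
Import Order.TTheory GRing.Theory Num.Theory.
Set Implicit Arguments. Unset Strict Implicit. Unset Printing Implicit Defensive.
Local Open Scope ring_scope.

(* Let x = L^+ (1_s - 1_t).  Then B_st^2 = |x|^2, L x = 1_s - 1_t, and x is
   orthogonal to every function constant along edges.  The energy of x equals
   x_s - x_t and, through the edge st, is at least (x_s - x_t)^2, so it is at
   most 1.  Clamping x to [x_t, x_s] does not raise the energy, so by the
   Dirichlet principle it only adds a function constant along edges, whence
   |x|^2 <= |z - c|^2 for the clamped z and every constant c.  For c a median of
   z, both halves (z - c)_+ and (c - z)_+ have support of size at most n/2 and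
   energy at most 1.  A sweep over the level sets of the square of the larger
   half then finds the cut: the coarea inequality gives a level set S with
   |p|^2 |E(S, V \ S)| <= D |S|, where D is the total variation of p^2, and
   Cauchy-Schwarz gives D^2 <= O(d_max) |p|^2. *)

Section RealInequalities.
Variable R : realDomainType.
Implicit Types a b c lo hi l : R.

Lemma sqr_sub_max_le a b c :
  (Num.max a c - Num.max b c) ^+ 2 <= (a - b) ^+ 2.
Proof.
rewrite !expr2; case: (leP a c) => ?; case: (leP b c) => ?;
  first [by rewrite subrr mul0r -expr2 sqr_ge0 | by [] | nra].
Qed.

Lemma sqr_sub_min_le a b c :
  (Num.min a c - Num.min b c) ^+ 2 <= (a - b) ^+ 2.
Proof.
rewrite !expr2; case: (leP a c) => ?; case: (leP b c) => ?;
  first [by rewrite subrr mul0r -expr2 sqr_ge0 | by [] | nra].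
Qed.

Definition clamp lo hi a := Num.min (Num.max a lo) hi.

Lemma sqr_sub_clamp_le lo hi a b :
  (clamp lo hi a - clamp lo hi b) ^+ 2 <= (a - b) ^+ 2.
Proof. exact: le_trans (sqr_sub_min_le _ _ _) (sqr_sub_max_le _ _ _). Qed.

Lemma clamp_id lo hi a : lo <= a <= hi -> clamp lo hi a = a.
Proof. by case/andP=> ? ?; rewrite /clamp max_l // min_l. Qed.

Lemma clamp_ge lo hi a : lo <= hi -> lo <= clamp lo hi a.
Proof. by move=> ?; rewrite /clamp le_min le_max lexx orbT. Qed.

Lemma clamp_le lo hi a : clamp lo hi a <= hi.
Proof. by rewrite /clamp ge_min lexx orbT. Qed.

(* AM-GM applied to [l (a - b)] and [a + b], as [a^2 - b^2 = (a - b) (a + b)]. *)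
Lemma max_sqr_sub_le a b l :
  2 * l * Num.max (a ^+ 2 - b ^+ 2) 0 <= l ^+ 2 * (a - b) ^+ 2 + 2 * (a ^+ 2 + b ^+ 2).
Proof.
have := sqr_ge0 (l * (a - b) - (a + b)); have := sqr_ge0 (l * (a - b) + (a + b)).
have := sqr_ge0 (a - b); rewrite !expr2.
case: (leP (a * a - b * b) 0) => h; rewrite ?max_r ?max_l ?(ltW h) //; nra.
Qed.

Lemma max_sub_peel (a b m : R) : 0 < m -> (a < m -> a = 0) -> (b < m -> b = 0) ->
  Num.max (a - b) 0
  = Num.max (Num.max (a - m) 0 - Num.max (b - m) 0) 0 + m * ((m <= a) && (b < m))%:R.
Proof.
move=> m0 ha hb.
have max0 c : c <= 0 -> Num.max c 0 = 0 by move/max_r.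
have maxid c : 0 <= c -> Num.max c 0 = c by move/max_l.
have max_m c : m <= c -> Num.max (c - m) 0 = c - m by rewrite -subr_ge0 => /maxid.
have max_m0 : Num.max (0 - m) 0 = 0 by rewrite max0 // sub0r oppr_le0 ltW.
case: (ltP a m) => [/ha -> | ma]; case: (ltP b m) => [/hb -> | mb] /=;
  rewrite ?mulr0 ?mulr1 ?addr0.
- by rewrite !subrr maxxx.
- by rewrite max_m0 max_m // !max0 //; lra.
- by rewrite max_m0 max_m // !subr0 !maxid; lra.
- by rewrite !max_m //; congr (Num.max _ 0); ring.
Qed.
Lemma sweep_arith P D c k kc N e d :
  0 < P -> 0 <= c -> 0 <= k -> 0 <= N ->
  P * c <= D * k -> D ^+ 2 <= 4 * e * d * P -> N <= 2 * kc ->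
  P * (N * c) ^+ 2 <= 16 * e * d * (k * kc) ^+ 2.
Proof.
move=> P_gt0 c_ge0 k_ge0 N_ge0 level DP N_le.
have Pc_le : P * c ^+ 2 <= 4 * e * d * k ^+ 2.
  have sq : (P * c) ^+ 2 <= (D * k) ^+ 2.
    by rewrite ler_pXn2r ?nnegrE // ?(le_trans _ level) // mulr_ge0 // ltW.
  rewrite -(ler_pM2l P_gt0) (_ : P * (P * c ^+ 2) = (P * c) ^+ 2); last by ring.
  apply: le_trans sq _; rewrite exprMn.
  by rewrite (_ : P * _ = 4 * e * d * P * k ^+ 2) ?ler_wpM2r ?sqr_ge0 //; ring.
have N2_le : N ^+ 2 <= 4 * kc ^+ 2.
  rewrite (_ : 4 * kc ^+ 2 = (2 * kc) ^+ 2); last by ring.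
  by rewrite ler_pXn2r ?nnegrE // (le_trans _ N_le).
have Pc2_ge0 : 0 <= P * c ^+ 2 by rewrite mulr_ge0 ?sqr_ge0 // ltW.
have := ler_wpM2r Pc2_ge0 N2_le.
have := ler_wpM2l (mulr_ge0 (ler0n R 4) (sqr_ge0 kc)) Pc_le.
rewrite !exprMn; nra.
Qed.
End RealInequalities.

Lemma natr_card_set (R : pzSemiRingType) (T : finType) (P : pred T) :
  #|[set v | P v]|%:R = \sum_i (P i)%:R :> R.
Proof.
rewrite -sum1dep_card natr_sum big_mkcond /=.
by apply: eq_bigr => i _; case: (P i).
Qed.

Lemma exists_median (R : realDomainType) (n : nat) (f : 'I_n -> R) (v0 : 'I_n) :
  exists w, (2 * #|[set v | (f w < f v)%R]| <= n)%N /\ (2 * #|[set v | (f v < f w)%R]| <= n)%N.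
Proof.
pose W := [pred w | (2 * #|[set v | (f w < f v)%R]| <= n)%N].
pose top := [arg max_(i > v0) f i]%O.
have W_top : W top.
  rewrite /W /= (_ : [set v | _] = set0) ?cards0 //; apply/setP => v; rewrite !inE.
  by rewrite /top; case: arg_maxP => //= i _ imax; rewrite ltNge imax.
pose w := [arg min_(i < top | W i) f i]%O.
have [Ww w_min] : W w /\ forall j, W j -> f w <= f j.
  by rewrite /w; case: arg_minP => //= i Wi imin; split => // j; apply: imin.
exists w; split => //; rewrite leqNgt; apply/negP => below_big.
set L := [set v | f v < f w] in below_big.
have [u0 u0L] : exists u0, u0 \in L by apply/set0Pn; rewrite -card_gt0; lia.
pose w' := [arg max_(i > u0 in L) f i]%O.
have [w'L w'_max] : w' \in L /\ forall j, j \in L -> f j <= f w'.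
  by rewrite /w'; case: arg_maxP => //= i Li imax; split => // j; apply: imax.
have /w_min : W w'.
  have above_sub : [set v | f w' < f v] \subset ~: L.
    apply/subsetP => v; rewrite !inE => w'v; apply/negP => vL.
    by have := w'_max v; rewrite inE => /(_ vL); rewrite leNgt w'v.
  apply: (@leq_trans (2 * #|~: L|)); first by rewrite leq_mul2l (subset_leq_card above_sub) orbT.
  by move: below_big (cardsC L); rewrite card_ord; lia.
by move: w'L; rewrite inE => /lt_le_trans h /h; rewrite ltxx.
Qed.

Lemma sum_mul_delta (R : pzSemiRingType) (n : nat) (f : 'I_n -> R) s :
  \sum_i f i * (i == s)%:R = f s.
Proof. by rewrite (bigD1 s) //= eqxx mulr1 big1 ?addr0 // => i /negbTE ->; rewrite mulr0. Qed.

Section GraphEnergy.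
Variables (R : realType) (n : nat) (adj : rel 'I_n).
Hypothesis adj_sym : symmetric adj.
Implicit Types (a f g k y : 'I_n -> R) (S : {set 'I_n}).

Definition lap_fun y i : R := \sum_j (adj i j)%:R * (y i - y j).

(* Each edge is counted twice: [dirichlet k k = 2 k^T L k]. *)
Definition dirichlet k y : R :=
  \sum_i \sum_j (adj i j)%:R * ((k i - k j) * (y i - y j)).

Definition edge_constant k := forall i j, adj i j -> k i = k j.

Lemma dirichlet_lap k y : dirichlet k y = 2 * \sum_i k i * lap_fun y i.
Proof.
have swap : \sum_i \sum_j (adj i j)%:R * (k j * (y i - y j))
          = - \sum_i \sum_j (adj i j)%:R * (k i * (y i - y j)).
  rewrite exchange_big -sumrN; apply: eq_bigr => i _.
  by rewrite -sumrN; apply: eq_bigr => j _; rewrite adj_sym; ring.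
have -> : dirichlet k y = \sum_i \sum_j (adj i j)%:R * (k i * (y i - y j))
                        - \sum_i \sum_j (adj i j)%:R * (k j * (y i - y j)).
  rewrite -sumrB; apply: eq_bigr => i _; rewrite -sumrB.
  by apply: eq_bigr => j _; ring.
rewrite swap opprK.
have -> : \sum_i \sum_j (adj i j)%:R * (k i * (y i - y j)) = \sum_i k i * lap_fun y i.
  by apply: eq_bigr => i _; rewrite /lap_fun mulr_sumr; apply: eq_bigr => j _; ring.
by ring.
Qed.

Lemma dirichlet_ge0 k : 0 <= dirichlet k k.
Proof.
by apply: sumr_ge0 => i _; apply: sumr_ge0 => j _; rewrite mulr_ge0 // -expr2 sqr_ge0.
Qed.

Lemma dirichlet_eq0 k : dirichlet k k = 0 -> edge_constant k.
Proof.
move=> k0 i j aij.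
pose F i' j' := (adj i' j')%:R * ((k i' - k j') * (k i' - k j')).
have F_ge0 i' j' : 0 <= F i' j' by rewrite mulr_ge0 // -expr2 sqr_ge0.
have row0 : \sum_j' F i j' = 0.
  have row_ge0 i' : predT i' -> 0 <= \sum_j' F i' j' by move=> _; apply: sumr_ge0.
  exact: (psumr_eq0P row_ge0 k0).
have /(_ j) := psumr_eq0P (P := predT) (fun j' _ => F_ge0 i j') row0 isT.
by rewrite /F aij mul1r => /eqP; rewrite mulf_eq0 orbb subr_eq0 => /eqP.
Qed.

Lemma dirichletD k y :
  dirichlet (fun i => k i + y i) (fun i => k i + y i)
  = dirichlet k k + 2 * dirichlet k y + dirichlet y y.
Proof.
rewrite /dirichlet mulr_sumr -!big_split; apply: eq_bigr => i _ /=.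
rewrite mulr_sumr -!big_split; apply: eq_bigr => j _ /=; ring.
Qed.

Lemma dirichlet_contract f g :
  (forall i j, (g i - g j) ^+ 2 <= (f i - f j) ^+ 2) -> dirichlet g g <= dirichlet f f.
Proof.
move=> fg; rewrite /dirichlet; apply: ler_sum => i _; apply: ler_sum => j _.
by rewrite -!expr2 ler_wpM2l.
Qed.

Lemma dirichlet_edge_ge s t k : adj s t -> s != t -> 2 * (k s - k t) ^+ 2 <= dirichlet k k.
Proof.
move=> ast st; set F := fun i j => (adj i j)%:R * ((k i - k j) * (k i - k j)).
have F_ge0 i j : 0 <= F i j by rewrite mulr_ge0 // -expr2 sqr_ge0.
have row_ge i j : F i j <= \sum_l F i l.
  by rewrite (bigD1 j) //= lerDl sumr_ge0.
have -> : 2 * (k s - k t) ^+ 2 = F s t + F t s.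
  by rewrite /F ast adj_sym ast !mul1r; ring.
rewrite /dirichlet -/F (bigD1 s) //=; apply: lerD; first exact: row_ge.
rewrite (bigD1 t) 1?eq_sym //=; apply: le_trans (row_ge t s) _; rewrite lerDl.
by apply: sumr_ge0 => i _; apply: sumr_ge0 => j _; apply: F_ge0.
Qed.

Lemma sum_mul_dipole s t k :
  \sum_i k i * ((i == s)%:R - (i == t)%:R) = k s - k t.
Proof.
by rewrite -(sum_mul_delta k s) -(sum_mul_delta k t) -sumrB; apply: eq_bigr => i _; rewrite mulrBr.
Qed.

Lemma sum_sqr_le_orth f k :
  \sum_i k i * f i = 0 -> \sum_i f i ^+ 2 <= \sum_i (f i + k i) ^+ 2.
Proof.
move=> kf; have -> : \sum_i (f i + k i) ^+ 2
    = \sum_i f i ^+ 2 + 2 * \sum_i k i * f i + \sum_i k i ^+ 2.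
  by rewrite mulr_sumr -!big_split; apply: eq_bigr => i _ /=; ring.
by rewrite kf mulr0 addr0 lerDl sumr_ge0 // => i _; apply: sqr_ge0.
Qed.

(* The cross term [dirichlet (z - x) x] vanishes since [x] is harmonic off [s], [t]. *)
Lemma dirichlet_principle s t x z :
  (forall i, lap_fun x i = (i == s)%:R - (i == t)%:R) ->
  z s = x s -> z t = x t -> dirichlet z z <= dirichlet x x ->
  edge_constant (fun i => z i - x i).
Proof.
move=> Lx zs zt zx; set k := fun i => z i - x i.
have kx : dirichlet k x = 0.
  rewrite dirichlet_lap (eq_bigr _ (fun i _ => congr1 (GRing.mul (k i)) (Lx i))).
  by rewrite sum_mul_dipole /k zs zt !subrr mulr0.
have zE : dirichlet z z = dirichlet (fun i => k i + x i) (fun i => k i + x i).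
  by apply: eq_bigr => i _; apply: eq_bigr => j _; rewrite /k !subrK.
apply: dirichlet_eq0; apply/eqP; rewrite eq_le dirichlet_ge0 andbT.
by move: zx; rewrite zE dirichletD kx; lra.
Qed.

Lemma clamped_potential s t x :
  adj s t -> s != t ->
  (forall i, lap_fun x i = (i == s)%:R - (i == t)%:R) ->
  (forall k, edge_constant k -> \sum_i k i * x i = 0) ->
  exists z, [/\ forall i, z t <= z i <= z s, dirichlet z z <= 2 &
                forall c, \sum_i x i ^+ 2 <= \sum_i (z i - c) ^+ 2].
Proof.
move=> ast st Lx x_orth.
have energyE : dirichlet x x = 2 * (x s - x t).
  by rewrite dirichlet_lap (eq_bigr _ (fun i _ => congr1 (GRing.mul (x i)) (Lx i))) sum_mul_dipole.
have energy_le2 : dirichlet x x <= 2.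
  by have := dirichlet_edge_ge x ast st; have := dirichlet_ge0 x; rewrite energyE; nra.
have xts : x t <= x s by have := dirichlet_ge0 x; rewrite energyE pmulr_rge0 // subr_ge0.
pose z i := clamp (x t) (x s) (x i).
have zs : z s = x s by rewrite /z clamp_id // xts lexx.
have zt : z t = x t by rewrite /z clamp_id // xts lexx.
have zx : dirichlet z z <= dirichlet x x.
  by apply: dirichlet_contract => i j; apply: sqr_sub_clamp_le.
exists z; split=> [i | | c]; first by rewrite zs zt clamp_ge ?clamp_le.
  exact: le_trans zx energy_le2.
have zx_const := dirichlet_principle Lx zs zt zx.
apply: le_trans (sum_sqr_le_orth (x_orth (fun i => z i - x i - c) _)) _.
  by move=> i j aij; rewrite (zx_const i j aij).
by rewrite le_eqVlt; apply/predU1P; left; apply: eq_bigr => i _; congr (_ ^+ 2); ring.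
Qed.

(* The sum over edges of [|a i - a j|]. *)
Definition variation a : R := \sum_i \sum_j (adj i j)%:R * Num.max (a i - a j) 0.

Definition superlevel a (h : R) : {set 'I_n} := [set v | h <= a v].

Lemma natr_cut_size S :
  (cut_size adj S)%:R = \sum_i \sum_j ([&& i \in S, j \notin S & adj i j])%:R :> R.
Proof.
rewrite /cut_size -sum1dep_card natr_sum big_mkcond /=.
rewrite (pair_bigA _ (fun i j => ([&& i \in S, j \notin S & adj i j])%:R)).
by apply: eq_bigr => p _; case: ifP.
Qed.

Lemma cut_sizeC S : cut_size adj (~: S) = cut_size adj S.
Proof.
apply/eqP; rewrite -(eqr_nat R) !natr_cut_size exchange_big; apply/eqP.
apply: eq_bigr => i _; apply: eq_bigr => j _.
by rewrite !inE negbK adj_sym; case: (i \in S); case: (j \in S); rewrite ?andbF.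
Qed.

Lemma iso_ratioC S : iso_ratio R adj (~: S) = iso_ratio R adj S.
Proof. by rewrite /iso_ratio cut_sizeC setCK [(#|~: S| * _)%N]mulnC. Qed.

Lemma ler_div_iso_ratio (K X : R) S :
  (0 < n * cut_size adj S)%N ->
  X * (n * cut_size adj S)%:R ^+ 2 <= K * (#|S| * #|~: S|)%:R ^+ 2 ->
  X <= K / iso_ratio R adj S ^+ 2.
Proof.
move=> cut_gt0 H; rewrite /iso_ratio expr_div_n invf_div mulrA ler_pdivlMr //.
by rewrite exprn_gt0 // ltr0n.
Qed.

Definition peel a m i : R := Num.max (a i - m) 0.

Lemma peel_ge0 a m i : 0 <= peel a m i.
Proof. by rewrite le_max lexx orbT. Qed.

Lemma peel_gt0 a m i : (0 < peel a m i) = (m < a i).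
Proof. by rewrite lt_max ltxx orbF subr_gt0. Qed.

Lemma superlevel_peel a m v :
  m < a v -> superlevel (peel a m) (peel a m v) = superlevel a (a v).
Proof.
move=> mv; apply/setP => u; rewrite !inE /peel [Num.max (a v - m) 0]max_l.
  by rewrite le_max lerD2r [a v - m <= 0]leNgt subr_gt0 mv orbF.
by rewrite subr_ge0 ltW.
Qed.

Section Peel.
Variables (a : 'I_n -> R) (m : R).
Hypotheses (m_gt0 : 0 < m) (a_gap : forall i, a i < m -> a i = 0).

Lemma sum_peel : \sum_i a i = \sum_i peel a m i + m * #|superlevel a m|%:R.
Proof.
rewrite natr_card_set mulr_sumr -big_split; apply: eq_bigr => i _ /=; rewrite /peel.
case: (ltP (a i) m) => [/a_gap -> | ma] /=.
  by rewrite max_r ?mulr0 ?addr0 // sub0r oppr_le0 ltW.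
by rewrite max_l ?subr_ge0 // mulr1 subrK.
Qed.

Lemma variation_peel :
  variation a = variation (peel a m) + m * (cut_size adj (superlevel a m))%:R.
Proof.
rewrite natr_cut_size mulr_sumr -big_split; apply: eq_bigr => i _ /=.
rewrite mulr_sumr -big_split; apply: eq_bigr => j _ /=.
rewrite (max_sub_peel m_gt0 (@a_gap i) (@a_gap j)) !inE -ltNge mulrDr.
by case: (adj i j); rewrite ?andbT ?andbF ?mul1r ?mul0r ?mulr0.
Qed.

End Peel.

(* Induction on the support: peeling off the least positive value [m0] of [a]
   splits both sides into the inequality for [peel a m0] and the one for the
   level set [{a >= m0}]. *)
Lemma coarea_lt (al be : R) a :
  (forall v, 0 <= a v) -> (exists v, 0 < a v) ->
  (forall v, 0 < a v ->
     al * #|superlevel a (a v)|%:R < be * (cut_size adj (superlevel a (a v)))%:R) ->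
  al * \sum_i a i < be * variation a.
Proof.
move: {2}#|_| (leqnn #|[set v | 0 < a v]|) => m.
elim: m a => [|m IH] a supp_le a_ge0 [v0 av0] levels.
  by move: supp_le; rewrite leqn0 => /eqP /cards0_eq /setP /(_ v0); rewrite !inE av0.
pose i0 := [arg min_(i < v0 | 0 < a i) a i]%O.
have [m0_gt0 m0_min] : 0 < a i0 /\ forall j, 0 < a j -> a i0 <= a j.
  by rewrite /i0; case: arg_minP => //= i ai Hi; split => // j; apply: Hi.
set m0 := a i0 in m0_gt0 m0_min.
have posE i : (0 < a i) = (m0 <= a i).
  by apply/idP/idP => [/m0_min // | ?]; apply: lt_le_trans m0_gt0 _.
have a_gap i : a i < m0 -> a i = 0.
  by rewrite ltNge -posE -leNgt => ai; apply/eqP; rewrite eq_le ai a_ge0.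
have rest : al * \sum_i peel a m0 i <= be * variation (peel a m0).
  case: (boolP [exists v, 0 < peel a m0 v]) => [/existsP [v av] | /existsPn a'0].
    apply/ltW/IH => [|u | | u au]; [| exact: peel_ge0 | by exists v |].
      rewrite -ltnS; apply: leq_trans supp_le; apply: proper_card; apply/properP.
      split; last by exists i0; rewrite !inE ?peel_gt0 ?ltxx.
      by apply/subsetP => u; rewrite !inE peel_gt0 posE => /ltW.
    by move: au; rewrite peel_gt0 => mu; rewrite superlevel_peel // levels // posE ltW.
  have a'_eq0 i : peel a m0 i = 0.
    by apply/eqP; rewrite eq_le peel_ge0 andbT leNgt a'0.
  rewrite /variation !big1 ?mulr0 // => i _; rewrite ?a'_eq0 //.
  by rewrite big1 // => j _; rewrite !a'_eq0 subrr maxxx mulr0.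
have low : al * (m0 * #|superlevel a m0|%:R) < be * (m0 * (cut_size adj (superlevel a m0))%:R).
  by rewrite mulrCA [be * _]mulrCA ltr_pM2l // levels.
rewrite (sum_peel m0_gt0 a_gap) (variation_peel m0_gt0 a_gap) !mulrDr.
by move: rest low; lra.
Qed.

Lemma exists_sweep_level a :
  (forall v, 0 <= a v) -> (exists v, 0 < a v) ->
  exists2 v, 0 < a v & (\sum_i a i) * (cut_size adj (superlevel a (a v)))%:R
                         <= variation a * #|superlevel a (a v)|%:R.
Proof.
move=> a_ge0 a_pos.
case: (boolP [exists v, (0 < a v) && ((\sum_i a i) * (cut_size adj (superlevel a (a v)))%:R
                                   <= variation a * #|superlevel a (a v)|%:R)]).
  by case/existsP => v /andP [av hv]; exists v.
move/existsPn => none.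
suff : variation a * \sum_i a i < (\sum_i a i) * variation a by rewrite mulrC ltxx.
apply: coarea_lt => // v av; rewrite ltNge.
by have := none v; rewrite av.
Qed.

Lemma sum_adj_deg f : \sum_i \sum_j (adj i j)%:R * f i = \sum_i (deg adj i)%:R * f i.
Proof. by apply: eq_bigr => i _; rewrite -mulr_suml /deg natr_card_set. Qed.

Lemma sum_edges_le_dmax f :
  (forall i, 0 <= f i) ->
  \sum_i \sum_j (adj i j)%:R * (f i + f j) <= 2 * (dmax adj)%:R * \sum_i f i.
Proof.
move=> f_ge0.
have -> : \sum_i \sum_j (adj i j)%:R * (f i + f j)
        = \sum_i \sum_j (adj i j)%:R * f i + \sum_i \sum_j (adj i j)%:R * f j.
  rewrite -big_split; apply: eq_bigr => i _; rewrite -big_split.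
  by apply: eq_bigr => j _; rewrite mulrDr.
have -> : \sum_i \sum_j (adj i j)%:R * f j = \sum_i \sum_j (adj i j)%:R * f i.
  by rewrite exchange_big; apply: eq_bigr => i _; apply: eq_bigr => j _; rewrite adj_sym.
have deg_le : \sum_i (deg adj i)%:R * f i <= (dmax adj)%:R * \sum_i f i.
  rewrite mulr_sumr; apply: ler_sum => i _.
  by rewrite ler_wpM2r // ler_nat (leq_bigmax (F := deg adj) i).
by rewrite sum_adj_deg; lra.
Qed.

(* Cauchy-Schwarz in AM-GM form, with the parameter [l] optimised at [D / e]. *)
Lemma variation_sqr_le p e :
  0 < e -> dirichlet p p <= e ->
  variation (fun i => p i ^+ 2) ^+ 2 <= 4 * e * (dmax adj)%:R * \sum_i p i ^+ 2.
Proof.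
move=> e_gt0 pe; set D := variation _; set P := \sum_i _.
have D_ge0 : 0 <= D.
  by apply: sumr_ge0 => i _; apply: sumr_ge0 => j _; rewrite mulr_ge0 // le_max lexx orbT.
have key l : 2 * l * D <= l ^+ 2 * e + 4 * (dmax adj)%:R * P.
  have : 2 * l * D <= l ^+ 2 * dirichlet p p
                      + 2 * \sum_i \sum_j (adj i j)%:R * (p i ^+ 2 + p j ^+ 2).
    rewrite /D /variation /dirichlet !mulr_sumr -big_split; apply: ler_sum => i _ /=.
    rewrite !mulr_sumr -big_split; apply: ler_sum => j _ /=.
    case: (adj i j); rewrite ?mul1r ?mul0r ?mulr0 ?addr0 // -expr2.
    exact: max_sqr_sub_le.
  have /= := sum_edges_le_dmax (fun i => sqr_ge0 (p i)); rewrite -/P.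
  have := ler_wpM2l (sqr_ge0 l) pe; lra.
have := key (D / e); set u := D / e.
have -> : D = u * e by rewrite /u divfK ?gt_eqF.
nra.
Qed.

Lemma sweep_cut s t p e :
  adj s t -> s != t -> 0 < e -> (forall i, 0 <= p i) -> dirichlet p p <= e ->
  (2 * #|[set v | (0 < p v)%R]| <= n)%N -> p t = 0 -> (forall i, p i <= p s) ->
  exists S, [/\ s \in S, t \notin S &
    \sum_i p i ^+ 2 <= 16 * e * (dmax adj)%:R / iso_ratio R adj S ^+ 2].
Proof.
move=> ast st e_gt0 p_ge0 pe supp_half pt p_max.
set P := \sum_i _; pose a i := p i ^+ 2.
have P_ge0 : 0 <= P by apply: sumr_ge0 => i _; apply: sqr_ge0.
have [P0 | /eqP P_neq0] := eqVneq P 0.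
  exists [set s]; rewrite !inE eqxx eq_sym st P0; split=> //.
  by apply: divr_ge0 (sqr_ge0 _); rewrite mulr_ge0 // mulr_ge0 // ltW.
have P_gt0 : 0 < P by rewrite lt_def P_ge0 andbT; apply/eqP.
have [v av level] : exists2 v, 0 < a v & P * (cut_size adj (superlevel a (a v)))%:R
                                       <= variation a * #|superlevel a (a v)|%:R.
  apply: exists_sweep_level => [i | ]; first exact: sqr_ge0.
  by have [v /andP [_ ?]] := psumr_neq0P (fun i _ => sqr_ge0 (p i)) P_neq0; exists v.
set S := superlevel a (a v) in level.
have sS : s \in S by rewrite inE ler_pXn2r ?nnegrE.
have tS : t \notin S by rewrite inE /a pt expr0n /= -ltNge.
have S_supp : S \subset [set v | 0 < p v].
  apply/subsetP => u; rewrite !inE => avu; have := lt_le_trans av avu.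
  by rewrite /a lt_def sqrf_eq0 => /andP [pu _]; rewrite lt_def pu p_ge0.
have n_le : n%:R <= 2 * #|~: S|%:R :> R.
  have S_half : (2 * #|S| <= n)%N.
    by apply: leq_trans supp_half; rewrite leq_mul2l (subset_leq_card S_supp) orbT.
  by rewrite -natrM ler_nat; move: S_half (cardsC S); rewrite card_ord; lia.
have cut_gt0 : (0 < cut_size adj S)%N.
  by rewrite card_gt0; apply/set0Pn; exists (s, t); rewrite inE /= sS tS ast.
exists S; split => //; apply: ler_div_iso_ratio.
  by rewrite muln_gt0 cut_gt0 (leq_ltn_trans _ (ltn_ord s)).
have := variation_sqr_le e_gt0 pe; rewrite -/P -/a !natrM => DP.
exact: sweep_arith level DP n_le.
Qed.

Lemma upper_sweep_cut s t z c e :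
  adj s t -> s != t -> 0 < e -> dirichlet z z <= e -> (forall i, z i <= z s) ->
  z t <= c -> (2 * #|[set v | (c < z v)%R]| <= n)%N ->
  exists S, [/\ s \in S, t \notin S &
    \sum_i peel z c i ^+ 2 <= 16 * e * (dmax adj)%:R / iso_ratio R adj S ^+ 2].
Proof.
move=> ast st e_gt0 ze z_max ztc above_half; apply: sweep_cut => //.
- exact: peel_ge0.
- apply: le_trans ze; apply: dirichlet_contract => i j.
  by apply: le_trans (sqr_sub_max_le _ _ _) _; rewrite opprB addrA subrK.
- rewrite (_ : [set v | (0 < peel z c v)%R] = [set v | (c < z v)%R]) //.
  by apply/setP => v; rewrite !inE peel_gt0.
- by rewrite /peel max_r // subr_le0.
- by move=> i; rewrite /peel ge_max !le_max lerD2r z_max lexx !orbT.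
Qed.

Lemma dirichletN z : dirichlet (fun i => - z i) (fun i => - z i) = dirichlet z z.
Proof. by apply: eq_bigr => i _; apply: eq_bigr => j _; rewrite -opprD mulrNN. Qed.

Lemma median_sweep_cut s t z e :
  adj s t -> s != t -> 0 < e -> (forall i, z t <= z i <= z s) -> dirichlet z z <= e ->
  exists c S, [/\ s \in S, t \notin S &
    \sum_i (z i - c) ^+ 2 <= 32 * e * (dmax adj)%:R / iso_ratio R adj S ^+ 2].
Proof.
move=> ast st e_gt0 z_bnd ze.
have [w [above_half below_half]] := exists_median z s; set c := z w in above_half below_half.
have [zct zcs] : z t <= c /\ c <= z s by have /andP [] := z_bnd w.
have z_max i : z i <= z s by have /andP [] := z_bnd i.
have [Sp [sSp tSp Hp]] := upper_sweep_cut ast st e_gt0 ze z_max zct above_half.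
have [Sq [tSq sSq Hq]] : exists S, [/\ t \in S, s \notin S &
    \sum_i peel (fun i => - z i) (- c) i ^+ 2
      <= 16 * e * (dmax adj)%:R / iso_ratio R adj S ^+ 2].
  apply: upper_sweep_cut; rewrite ?dirichletN ?lerN2 // 1?eq_sym //; first by rewrite adj_sym.
    by move=> i; rewrite lerN2; have /andP [] := z_bnd i.
  rewrite (_ : [set v | (- c < - z v)%R] = [set v | (z v < c)%R]) //.
  by apply/setP => v; rewrite !inE ltrN2.
have split_sq : \sum_i (z i - c) ^+ 2
              = \sum_i peel z c i ^+ 2 + \sum_i peel (fun i => - z i) (- c) i ^+ 2.
  rewrite -big_split; apply: eq_bigr => i _ /=; rewrite /peel opprK (addrC (- z i)).
  case: (leP (z i) c) => zc.
    by rewrite max_r ?subr_le0 // max_l ?subr_ge0 // expr0n /= add0r -sqrrN opprB.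
  by rewrite max_l ?subr_ge0 ?ltW // max_r ?subr_le0 ?ltW // expr0n /= addr0.
exists c; rewrite split_sq; case: (leP (\sum_i peel (fun i => - z i) (- c) i ^+ 2)
                                       (\sum_i peel z c i ^+ 2)) => pq.
  by exists Sp; split => //; move: Hp; lra.
exists (~: Sq); rewrite !inE sSq negbK tSq iso_ratioC; split => //; move: Hq; lra.
Qed.

Lemma potential_sweep_cut s t x :
  adj s t -> s != t ->
  (forall i, lap_fun x i = (i == s)%:R - (i == t)%:R) ->
  (forall k, edge_constant k -> \sum_i k i * x i = 0) ->
  exists S, [/\ s \in S, t \notin S &
    \sum_i x i ^+ 2 <= 64 * (dmax adj)%:R / iso_ratio R adj S ^+ 2].
Proof.
move=> ast st Lx x_orth.
have [z [z_bnd z_energy x_le]] := clamped_potential ast st Lx x_orth.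
have [c [S [sS tS zc_le]]] := median_sweep_cut ast st (ltr0Sn R 1) z_bnd z_energy.
exists S; split => //; apply: le_trans (x_le c) (le_trans zc_le _).
by rewrite le_eqVlt; apply/predU1P; left; ring.
Qed.

End GraphEnergy.

Lemma pinv_unique (R : realType) (n : nat) (A X Y : 'M[R]_n) :
  A^T = A -> is_pinv A X -> is_pinv A Y -> X = Y.
Proof.
move=> sA [X1 X2 X3 X4] [Y1 Y2 Y3 Y4].
have tAX : (A *m X)^T = X^T *m A by rewrite trmx_mul sA.
have tAY : (A *m Y)^T = Y^T *m A by rewrite trmx_mul sA.
have tXA : (X *m A)^T = A *m X^T by rewrite trmx_mul sA.
have tYA : (Y *m A)^T = A *m Y^T by rewrite trmx_mul sA.
have AYA : A *m Y^T *m A = A by have := congr1 trmx Y1; rewrite !trmx_mul sA mulmxA.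
have AXA : A *m X^T *m A = A by have := congr1 trmx X1; rewrite !trmx_mul sA mulmxA.
have HX : X = X *m A *m Y.
  have XXA : X = X *m X^T *m A by rewrite -mulmxA -tAX X3 mulmxA X2.
  have -> : X *m A *m Y = X *m (A *m X) *m (A *m Y) by rewrite !mulmxA X2.
  rewrite -X3 -Y3 tAX tAY !mulmxA -[X *m X^T *m A *m Y^T *m A]mulmxA.
  by rewrite -!mulmxA (mulmxA A) AYA !mulmxA.
have HY : Y = X *m A *m Y.
  have AYY : Y = A *m Y^T *m Y by rewrite -tYA Y4 Y2.
  have -> : X *m A *m Y = (X *m A) *m (Y *m A) *m Y by rewrite -(mulmxA (X *m A)) Y2.
  by rewrite -X4 -Y4 tXA tYA mulmxA AXA.
by rewrite HY -HX.
Qed.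

Lemma pinv_sym (R : realType) (n : nat) (A X : 'M[R]_n) :
  A^T = A -> is_pinv A X -> X^T = X.
Proof.
move=> sA X_pinv; apply: (pinv_unique sA) => //; case: X_pinv => [X1 X2 X3 X4]; split.
- by have := congr1 trmx X1; rewrite !trmx_mul sA mulmxA.
- by have := congr1 trmx X2; rewrite !trmx_mul sA mulmxA.
- by rewrite trmx_mul trmxK sA -X4 trmx_mul sA.
- by rewrite trmx_mul trmxK sA -{1}X3 trmx_mul sA.
Qed.

Lemma mx_dotE (R : realType) (n : nat) (u v : 'cV[R]_n) :
  (u^T *m v) 0 0 = \sum_i u i 0 * v i 0.
Proof. by rewrite mxE; apply: eq_bigr => i _; rewrite mxE. Qed.

Section LaplacianPinv.
Variables (R : realType) (n : nat) (adj : rel 'I_n) (X : 'M[R]_n).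
Hypotheses (adj_sym : symmetric adj) (X_pinv : is_pinv (laplacian R adj) X).
Local Notation L := (laplacian R adj).

Lemma laplacian_sym : L^T = L.
Proof. by apply/matrixP => i j; rewrite !mxE adj_sym eq_sym; case: eqP => // ->. Qed.

Lemma laplacian_mulE (y : 'cV[R]_n) i : (L *m y) i 0 = lap_fun adj (fun j => y j 0) i.
Proof.
rewrite mxE /lap_fun.
have -> : \sum_j L i j * y j 0
          = \sum_j ((\sum_l (adj i l)%:R) * y j 0 * (j == i)%:R - (adj i j)%:R * y j 0).
  by apply: eq_bigr => j _; rewrite !mxE eq_sym /deg natr_card_set; case: eqP => _ /=; ring.
by rewrite sumrB sum_mul_delta mulr_suml -sumrB; apply: eq_bigr => j _; ring.
Qed.

Lemma laplacian_pinvC : L *m X = X *m L.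
Proof.
case: X_pinv => _ _ X3 _.
by rewrite -X3 trmx_mul laplacian_sym (pinv_sym laplacian_sym X_pinv).
Qed.

Lemma laplacian_edge_constant k : edge_constant adj k -> L *m \col_i k i = 0.
Proof.
move=> k_const; apply/matrixP => i j; rewrite ord1 laplacian_mulE mxE /lap_fun big1 // => l _.
by rewrite !mxE; case: (boolP (adj i l)) => [/k_const -> | _]; rewrite ?subrr ?mulr0 ?mul0r.
Qed.

Lemma pinv_orth_edge_constant k (b : 'cV[R]_n) :
  edge_constant adj k -> \sum_i k i * (X *m b) i 0 = 0.
Proof.
case: X_pinv => _ X2 _ _ /laplacian_edge_constant Lk.
have kX : (\col_i k i)^T *m X = 0.
  rewrite -X2 !mulmxA -(mulmxA _ X L) -laplacian_pinvC mulmxA.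
  by rewrite -{1}laplacian_sym -trmx_mul Lk trmx0 !mul0mx.
have := congr1 (fun M => (M *m b) 0 0) kX.
rewrite -mulmxA mx_dotE mul0mx [(0 : 'M[R]_(1, 1)) 0 0]mxE => kXb; rewrite -[RHS]kXb.
by apply: eq_bigr => i _; rewrite mxE.
Qed.

(* [w = b - L X b] lies in the kernel of [L], so it is constant along the edge [st]
   and [w^T w = w^T b = w_s - w_t = 0]. *)
Lemma laplacian_pinv_dipole s t :
  adj s t -> L *m (X *m (ind R s - ind R t)) = ind R s - ind R t.
Proof.
case: X_pinv => X1 _ _ _ ast; set b := ind R s - ind R t.
set w := b - L *m (X *m b).
have Lw : L *m w = 0 by rewrite mulmxBr !mulmxA -(mulmxA L L X) laplacian_pinvC mulmxA X1 subrr.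
have w_const : edge_constant adj (fun i => w i 0).
  apply: dirichlet_eq0; rewrite dirichlet_lap // big1 ?mulr0 // => i _.
  by rewrite -laplacian_mulE Lw [(0 : 'cV[R]_n) i 0]mxE mulr0.
have bE i : b i 0 = (i == s)%:R - (i == t)%:R by rewrite !mxE.
have ww : \sum_i w i 0 ^+ 2 = 0.
  have : (w^T *m w) 0 0 = (w^T *m b) 0 0.
    by rewrite {2}/w mulmxBr (mulmxA w^T) -{1}laplacian_sym -trmx_mul Lw trmx0 mul0mx subr0.
  rewrite !mx_dotE (eq_bigr _ (fun i _ => congr1 (GRing.mul (w i 0)) (bE i))) sum_mul_dipole.
  rewrite (w_const _ _ ast) subrr => ww0; rewrite -[RHS]ww0.
  by apply: eq_bigr => i _; rewrite expr2.
apply/eqP; rewrite eq_sym -subr_eq0 -/w; apply/eqP/matrixP => i j.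
rewrite ord1 [(0 : 'cV[R]_n) i 0]mxE.
have /(_ i) := psumr_eq0P (P := predT) (fun i _ => sqr_ge0 (w i 0)) ww.
by move=> /(_ isT) /eqP; rewrite sqrf_eq0 => /eqP.
Qed.

Lemma biharmonic_sqr s t :
  biharmonic X s t ^+ 2 = \sum_i (X *m (ind R s - ind R t)) i 0 ^+ 2.
Proof.
have XX : forall b : 'cV[R]_n, b^T *m (X *m X) *m b = (X *m b)^T *m (X *m b).
  by move=> b; rewrite trmx_mul (pinv_sym laplacian_sym X_pinv) !mulmxA.
rewrite /biharmonic XX mx_dotE sqr_sqrtr; last by apply: sumr_ge0 => i _; rewrite -expr2 sqr_ge0.
by apply: eq_bigr => i _; rewrite expr2.
Qed.

End LaplacianPinv.

Theorem theorem5p4 (R : realType) :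
  exists C : R, 0 < C /\
  forall (n : nat) (adj : rel 'I_n) (s t : 'I_n) (Lp : 'M[R]_n),
    simple_graph adj ->
    adj s t ->
    is_pinv (laplacian R adj) Lp ->
    exists S : {set 'I_n},
      [/\ s \in S, t \notin S &
          biharmonic Lp s t ^+ 2 <= C * (dmax adj)%:R / iso_ratio R adj S ^+ 2].
Proof.
exists 64; split => // n adj s t X [adj_sym adj_irr] ast X_pinv.
have st : s != t by apply: contraTneq ast => ->; rewrite adj_irr.
rewrite (biharmonic_sqr adj_sym X_pinv); apply: potential_sweep_cut => //.
- by move=> i; rewrite -laplacian_mulE laplacian_pinv_dipole // !mxE.
- by move=> k; apply: pinv_orth_edge_constant.
Qed.
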